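(* Let $(M,\cdot,1)$ be a monoid without a zero element, $\Sigma$ a finite alphabet, and $(g_h,h)$ a maximal factorization on $L$. Then $\mathcal{R}_L=\mathrm{RcgCap}^{(g_h,h)}_L$.
   Context: $L$ is the set of all functions $\Sigma^*\to M$; $\varepsilon$ the empty word; $(m\cdot\ell)(\gamma)=m\cdot\ell(\gamma)$; $\Delta_\alpha(\ell)(\gamma)=\ell(\alpha\gamma)$. A factorization on $L$ is a pair $g:L\to M$, $f:L\to L$ with $g(\ell)\cdot f(\ell)=\ell$ for all $\ell$; it is maximal if moreover $f(m\cdot\ell)=f(\ell)$ for all $\ell\in L$, $m\in M$. Define $S^{(g,f)}_\varepsilon=\mathrm{id}_L$, $S^{(g,f)}_{\alpha\sigma}=f\circ\Delta_\sigma\circ S^{(g,f)}_\alpha$. An $M$-DFA is $(Q,\Sigma,u,i_u,\delta,w,\rho)$ with $Q$ finite nonempty, initial state $u$, initial value $i_u\in M$, $\delta:Q\times\Sigma\to Q$, $w:Q\times\Sigma\to M$, $\rho:Q\to M$; with $q\alpha$ the extended transition and $w^*(q,\varepsilon)=1$, $w^*(q,\alpha\sigma)=w^*(q,\alpha)\cdot w(q\alpha,\sigma)$, it recognizes $\alpha\mapsto i_u\cdot w^*(u,\alpha)\cdot\rho(u\alpha)$. $\mathcal{R}_L$ is the set of $M$-languages recognized by some $M$-DFA. For a factorization $(g,f)$, $\mathrm{RcgCap}^{(g,f)}_L$ is the set of $\ell\in L$ such that the automaton $N^{(g,f)}(f(\ell),1)$ is an $M$-DFA, i.e. such that $\{S^{(g,f)}_\alpha(f(\ell))\mid\alpha\in\Sigma^*\}$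 is finite; here $N^{(g,f)}(\ell',m)$ has states $S^{(g,f)}_\alpha(\ell')$, initial state $\ell'$, initial value $m$, $\delta(S^{(g,f)}_\alpha(\ell'),\sigma)=S^{(g,f)}_{\alpha\sigma}(\ell')$, $w(S^{(g,f)}_\alpha(\ell'),\sigma)=g(\Delta_\sigma(S^{(g,f)}_\alpha(\ell')))$, $\rho(S^{(g,f)}_\alpha(\ell'))=(S^{(g,f)}_\alpha(\ell'))(\varepsilon)$. *)

From mathcomp Require Import all_boot.
Set Implicit Arguments. Unset Strict Implicit. Unset Printing Implicit Defensive.

Record is_monoid (M : Type) (mul : M -> M -> M) (one : M) : Prop := {
  monoid_mulA : forall a b c, mul a (mul b c) = mul (mul a b) c;
  monoid_mul1m : forall a, mul one a = a;
  monoid_mulm1 : forall a, mul a one = a }.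

Definition is_zero_elt (M : Type) (mul : M -> M -> M) (z : M) : Prop :=
  forall m, mul z m = z /\ mul m z = z.

Definition lang (Sigma : Type) (M : Type) := seq Sigma -> M.

Definition lscale (Sigma M : Type) (mul : M -> M -> M) (m : M) (l : lang Sigma M)
  : lang Sigma M := fun gamma => mul m (l gamma).

Definition Delta (Sigma M : Type) (a : Sigma) (l : lang Sigma M) : lang Sigma M :=
  fun gamma => l (a :: gamma).

Definition factorization (Sigma M : Type) (mul : M -> M -> M)
  (g : lang Sigma M -> M) (f : lang Sigma M -> lang Sigma M) : Prop :=
  forall l, lscale mul (g l) (f l) = l.

Definition maximal_factorization (Sigma M : Type) (mul : M -> M -> M)
  (g : lang Sigma M -> M) (f : lang Sigma M -> lang Sigma M) : Prop :=
  factorization mul g f /\ forall l m, f (lscale mul m l) = f l.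

(* S_eps = id, S_{alpha sigma} = f o Delta_sigma o S_alpha
   (left fold over the word: the last letter is applied last). *)
Definition Sfg (Sigma M : Type) (f : lang Sigma M -> lang Sigma M)
  (alpha : seq Sigma) (l : lang Sigma M) : lang Sigma M :=
  foldl (fun l' s => f (Delta s l')) l alpha.

Definition dstar (Q Sigma : Type) (delta : Q -> Sigma -> Q) (q : Q) (alpha : seq Sigma) : Q :=
  foldl delta q alpha.

(* Extended weight: w*(q,eps) = 1, w*(q, alpha sigma) = w*(q,alpha) * w(q alpha, sigma). *)
Definition wstar (Q Sigma M : Type) (mul : M -> M -> M) (one : M)
  (delta : Q -> Sigma -> Q) (w : Q -> Sigma -> M) (q : Q) (alpha : seq Sigma) : M :=
  (foldl (fun (p : Q * M) s => (delta p.1 s, mul p.2 (w p.1 s))) (q, one) alpha).2.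

Definition dfa_lang (Q Sigma M : Type) (mul : M -> M -> M) (one : M)
  (u : Q) (iu : M) (delta : Q -> Sigma -> Q) (w : Q -> Sigma -> M) (rho : Q -> M)
  : lang Sigma M :=
  fun alpha => mul (mul iu (wstar mul one delta w u alpha)) (rho (dstar delta u alpha)).

(* R_L : languages recognized by some M-DFA (finite state set Q, nonempty
   since it contains the initial state u). *)
Definition recognizable (Sigma M : Type) (mul : M -> M -> M) (one : M)
  (l : lang Sigma M) : Prop :=
  exists (Q : finType) (u : Q) (iu : M) (delta : Q -> Sigma -> Q)
         (w : Q -> Sigma -> M) (rho : Q -> M),
    l = dfa_lang mul one u iu delta w rho.

Definition finite_range (A Sigma M : Type) (F : A -> lang Sigma M) : Prop :=
  exists (n : nat) (e : 'I_n -> lang Sigma M), forall a, exists i, F a = e i.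

Definition RcgCap (Sigma M : Type) (f : lang Sigma M -> lang Sigma M)
  (l : lang Sigma M) : Prop :=
  finite_range (fun alpha : seq Sigma => Sfg f alpha (f l)).

(* The languages L_q of the states of an M-DFA satisfy L_q(s a) = w(q,s) L_(q s)(a).
   As g h is a factorization, every language X satisfies the same law in the
   automaton N^(g,h) whose states are all languages (transition h(Delta_s X), weight
   g(Delta_s X), output X(eps)).  Its states reachable from h l are the S_alpha(h l);
   if they are finitely many, restricting N^(g,h) to them gives a finite M-DFA for l.
   Conversely, since h ignores scalar factors, S_alpha(h L_u) = h(L_(u alpha)), so
   the S_alpha(h l) range over the finitely many h(L_q). *)

From Stdlib Require Import FunctionalExtensionality IndefiniteDescription ClassicalEpsilon.
From mathcomp Require Import all_boot.

Set Implicit Arguments.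
Unset Strict Implicit.
Unset Printing Implicit Defensive.

Section MonoidAutomata.

Variables (M : Type) (mul : M -> M -> M) (one : M).
Hypothesis HM : is_monoid mul one.
Variable Sigma : Type.

Section StateLanguage.

Variables (Q : Type) (delta : Q -> Sigma -> Q) (w : Q -> Sigma -> M) (rho : Q -> M).

Definition state_lang (q : Q) : lang Sigma M :=
  fun a => mul (wstar mul one delta w q a) (rho (dstar delta q a)).

Lemma wstar_cons q s a :
  wstar mul one delta w q (s :: a) = mul (w q s) (wstar mul one delta w (delta q s) a).
Proof.
pose step (p : Q * M) s := (delta p.1 s, mul p.2 (w p.1 s)).
have acc b q' m : (foldl step (q', m) b).2 = mul m (foldl step (q', one) b).2.
  elim: b q' m => [|s' b IHb] q' m /=; first by rewrite (monoid_mulm1 HM).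
  by rewrite IHb [in RHS]IHb (monoid_mul1m HM) (monoid_mulA HM).
by rewrite /wstar /= -/step acc (monoid_mul1m HM).
Qed.

Lemma state_lang_cons q s a :
  state_lang q (s :: a) = mul (w q s) (state_lang (delta q s) a).
Proof. by rewrite /state_lang wstar_cons (monoid_mulA HM). Qed.

Lemma Delta_state_lang q s :
  Delta s (state_lang q) = lscale mul (w q s) (state_lang (delta q s)).
Proof. by apply: functional_extensionality => a; apply: state_lang_cons. Qed.

Lemma dfa_langE u iu : dfa_lang mul one u iu delta w rho = lscale mul iu (state_lang u).
Proof.
by apply: functional_extensionality => a; rewrite /dfa_lang /lscale (monoid_mulA HM).
Qed.

End StateLanguage.

Lemma state_lang_simulation (Q Q' : Type) (delta : Q -> Sigma -> Q) (w : Q -> Sigma -> M)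
    (rho : Q -> M) (delta' : Q' -> Sigma -> Q') (phi : Q' -> Q) (P : Q' -> Prop) :
    (forall q s, P q -> P (delta' q s) /\ phi (delta' q s) = delta (phi q) s) ->
  forall q, P q ->
    state_lang delta' (fun q s => w (phi q) s) (fun q => rho (phi q)) q
    = state_lang delta w rho (phi q).
Proof.
move=> sim q Pq; apply: functional_extensionality => a.
elim: a q Pq => [//|s a IHa] q Pq.
have [Pq' phi_q'] := sim q s Pq.
by rewrite !state_lang_cons IHa // phi_q'.
Qed.

Lemma finite_reachable_recognizable (Q : Type) (u : Q) (iu : M)
    (delta : Q -> Sigma -> Q) (w : Q -> Sigma -> M) (rho : Q -> M) :
    (exists n (e : 'I_n -> Q), forall a, exists i, dstar delta u a = e i) ->
  recognizable mul one (dfa_lang mul one u iu delta w rho).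
Proof.
case=> n [e He]; have [idx idxP] := functional_choice _ He.
pose reachable i := exists b, e i = dstar delta u b.
(* For an unreachable i, rep i is junk; such states are never visited. *)
pose rep i := epsilon (inhabits [::]) (fun b => e i = dstar delta u b).
pose delta' i s := idx (rcons (rep i) s).
have sim i s : reachable i -> reachable (delta' i s) /\ e (delta' i s) = delta (e i) s.
  move=> /(epsilon_spec (inhabits [::])) e_rep.
  have e_delta' : e (delta' i s) = dstar delta u (rcons (rep i) s) by rewrite -idxP.
  split; first by exists (rcons (rep i) s).
  by rewrite e_delta' /dstar foldl_rcons -/(dstar delta u _) -e_rep.
exists ('I_n : finType), (idx [::]), iu, delta', (fun i s => w (e i) s), (fun i => rho (e i)).
rewrite !dfa_langE (state_lang_simulation w rho sim); first by rewrite -idxP.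
by exists [::]; rewrite -idxP.
Qed.

Section Factorization.

Variables (g : lang Sigma M -> M) (h : lang Sigma M -> lang Sigma M).

Definition lang_delta (X : lang Sigma M) (s : Sigma) : lang Sigma M := h (Delta s X).
Definition lang_weight (X : lang Sigma M) (s : Sigma) : M := g (Delta s X).
Definition lang_output (X : lang Sigma M) : M := X [::].

Hypothesis Hfact : factorization mul g h.

Lemma state_lang_lang X : state_lang lang_delta lang_weight lang_output X = X.
Proof.
apply: functional_extensionality => a; elim: a X => [|s a IHa] X.
  by rewrite /state_lang /= (monoid_mul1m HM).
rewrite state_lang_cons IHa.
by rewrite -[X (s :: a)]/(Delta s X a) -(Hfact (Delta s X)).
Qed.

Lemma dfa_lang_factorization l :
  dfa_lang mul one (h l) (g l) lang_delta lang_weight lang_output = l.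
Proof. by rewrite dfa_langE state_lang_lang Hfact. Qed.

Lemma RcgCap_recognizable l : RcgCap h l -> recognizable mul one l.
Proof.
move=> finS; rewrite -(dfa_lang_factorization l).
exact: finite_reachable_recognizable.
Qed.

Hypothesis h_lscale : forall l m, h (lscale mul m l) = h l.

Lemma h_Delta_h s X : h (Delta s (h X)) = h (Delta s X).
Proof. by rewrite -{2}(Hfact X); exact: (esym (h_lscale _ _)). Qed.

Lemma Sfg_h_state_lang (Q : Type) (delta : Q -> Sigma -> Q) (w : Q -> Sigma -> M)
    (rho : Q -> M) a q :
  Sfg h a (h (state_lang delta w rho q)) = h (state_lang delta w rho (dstar delta q a)).
Proof.
elim: a q => [//|s a IHa] q.
by rewrite [LHS]/= h_Delta_h Delta_state_lang h_lscale IHa.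
Qed.

Lemma recognizable_RcgCap l : recognizable mul one l -> RcgCap h l.
Proof.
case=> Q [u [iu [delta [w [rho ->]]]]].
exists #|Q|, (fun i => h (state_lang delta w rho (enum_val i))) => a.
exists (enum_rank (dstar delta u a)).
by rewrite enum_rankK dfa_langE h_lscale Sfg_h_state_lang.
Qed.

End Factorization.

End MonoidAutomata.

Theorem lemma6 (M : Type) (mul : M -> M -> M) (one : M)
  (HM : is_monoid mul one) (Hnozero : ~ exists z : M, is_zero_elt mul z)
  (Sigma : finType)
  (g : lang Sigma M -> M) (h : lang Sigma M -> lang Sigma M)
  (Hmax : maximal_factorization mul g h) :
  forall l : lang Sigma M, recognizable mul one l <-> RcgCap h l.
Proof.
case: Hmax => Hfact h_lscale l; split.
- exact: recognizable_RcgCap.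
- exact: RcgCap_recognizable.
Qed.
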